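(* Let $q$ be a prime power, let $m,n\ge1$ with $\gcd(n,q^m-1)=1$. Let $l(x)=\sum_{v=0}^{m} b_v x^{q^v}\in\mathbb{F}_q[x]$ be such that its conventional $q$-associate $\bar l(x)=\sum_{v=0}^m b_v x^v$ is a primitive polynomial of degree $m$ over $\mathbb{F}_q$ with $\bar l(x)\neq x-1$. Let $f(x)$ be a monic irreducible polynomial of degree $n$ over $\mathbb{F}_q$. Let $R(x)$ be the remainder of $l(x)$ modulo $f(x)$, and let $\psi(x)=\sum_{u=0}^n\psi_u x^u\in\mathbb{F}_q[x]$ be the monic nonzero polynomial of least degree satisfying $$\sum_{u=0}^{n}\psi_u\,(R(x))^u\equiv 0\pmod{f(x)}.$$ Then $\psi(x)$ is an irreducible polynomial of degree $n$ over $\mathbb{F}_q$, and $F(x)=\psi(l(x))/f(x)$ is an irreducible polynomial of degree $n(q^m-1)$ over $\mathbb{F}_q$.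
   Context: A primitive polynomial of degree $m$ over $\mathbb{F}_q$ is a monic irreducible polynomial of degree $m$ whose roots are generators of the multiplicative group $\mathbb{F}_{q^m}^*$. *)

From HB Require Import structures.
From mathcomp Require Import all_boot all_order all_algebra all_field.
Set Implicit Arguments. Unset Strict Implicit. Unset Printing Implicit Defensive.
Import GRing.Theory.
Local Open Scope ring_scope.

(* Primitive polynomials: we use mathcomp's qfpoly.primitive_poly
   (monic, irreducible, and X has multiplicative order exactly q^deg - 1
   modulo p, i.e. its roots generate the multiplicative group of F_{q^deg}). *)

Definition linpoly (F : finFieldType) (m : nat) (b : nat -> F) : {poly F} :=
  \sum_(v < m.+1) b v *: 'X^(#|F| ^ v).

Definition conv_assoc (F : finFieldType) (m : nat) (b : nat -> F) : {poly F} :=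
  \sum_(v < m.+1) b v *: 'X^v.

From HB Require Import structures.
From mathcomp Require Import all_boot all_order all_algebra all_field.
Import GRing.Theory.
Local Open Scope ring_scope.

Set Implicit Arguments.
Unset Strict Implicit.
Unset Printing Implicit Defensive.

(* Write L_p(x) = sum_i p_i x^(q^i) for the linearized q-associate of p, so
   that l = L_c, L_(p r) = L_p o L_r and L_(x^k - 1)(x) = x^(q^k) - x.  Let
   alpha be a root of f and beta = L_c(alpha); psi is the minimal polynomial of
   beta.  As c is coprime to x^n - 1, some u satisfies u c = 1 mod x^n - 1, so
   L_u inverts L_c on F_(q^n); hence alpha and beta generate the same field and
   deg psi = n.
   Let gamma be a root of an irreducible factor h of psi(l)/f and d = deg h.
   Then L_u(L_c(gamma)) is a root of f fixed by x |-> x^(q^d), so n | d.  Since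
   psi(l) divides (x^(q^n) - x) o l, whose derivative is the nonzero constant
   -c_0, psi(l) is squarefree; so h <> f and kappa = gamma^(q^n) - gamma is
   nonzero.  Now L_c(kappa) = 0 because L_c(gamma) lies in F_(q^n), and
   L_(x^d - 1)(kappa) = 0, so c is not coprime to x^d - 1, i.e. q^m - 1 | d.
   Therefore n (q^m - 1) divides d <= deg (psi(l)/f) = n (q^m - 1). *)

Section QPower.
Variables (F : finFieldType) (K : fieldType) (iota : {rmorphism F -> K}).
Local Notation q := #|F|.

Lemma card_pnat_pchar : [pchar K].-nat q.
Proof.
have [p p_pr p_char] := finPcharP F.
have -> : q = (p ^ logn p q)%N by exact: card_pprimeChar p_char.
by rewrite pnatX pnatE // (rmorph_pchar iota p_char).
Qed.

Lemma exprqD i (x y : K) : (x + y) ^+ (q ^ i) = x ^+ (q ^ i) + y ^+ (q ^ i).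
Proof. by apply: exprDn_pchar; rewrite pnatX card_pnat_pchar. Qed.

Lemma exprq0 i : (0 : K) ^+ (q ^ i) = 0.
Proof. by rewrite expr0n expn_eq0 eqn0Ngt (ltnW (finNzRing_gt1 F)). Qed.

Lemma exprqB i (x y : K) : (x - y) ^+ (q ^ i) = x ^+ (q ^ i) - y ^+ (q ^ i).
Proof. by apply: (addIr (y ^+ (q ^ i))); rewrite -exprqD !subrK. Qed.

Lemma exprq_sum i (I : Type) (r : seq I) (P : pred I) (G : I -> K) :
  (\sum_(j <- r | P j) G j) ^+ (q ^ i) = \sum_(j <- r | P j) G j ^+ (q ^ i).
Proof. by apply: (big_morph (fun z => z ^+ (q ^ i))); [exact: exprqD | exact: exprq0]. Qed.

Lemma exprq_rmorph i (a : F) : iota a ^+ (q ^ i) = iota a.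
Proof.
rewrite -rmorphXn; congr (iota _).
by elim: i => [|i IH]; rewrite ?expr1 // expnSr exprM IH expf_card.
Qed.

Lemma horner_exprq i (p : {poly F}) (y : K) :
  (map_poly iota p).[y] ^+ (q ^ i) = (map_poly iota p).[y ^+ (q ^ i)].
Proof.
rewrite !horner_coef exprq_sum; apply: eq_bigr => j _.
by rewrite exprMn coef_map exprq_rmorph exprAC.
Qed.

Lemma exprq_modn n r (y : K) :
  y ^+ (q ^ n) = y -> y ^+ (q ^ r) = y ^+ (q ^ (r %% n)%N).
Proof.
move=> y_fix; rewrite {1}(divn_eq r n).
elim: (r %/ n)%N => [|k IH]; first by rewrite mul0n add0n.
by rewrite mulSn -addnA expnD exprM y_fix IH.
Qed.

End QPower.

Section LinearizedAssociate.
Variable F : finFieldType.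
Local Notation q := #|F|.
Implicit Types p r : {poly F}.

Definition lin_assoc (p : {poly F}) : {poly F} :=
  \sum_(i < size p) p`_i *: 'X^(q ^ i).

Lemma lin_assocE N p :
  (size p <= N)%N -> lin_assoc p = \sum_(i < N) p`_i *: 'X^(q ^ i).
Proof.
move=> le_pN; rewrite /lin_assoc (big_ord_widen N (fun i => p`_i *: 'X^(q ^ i))) //.
rewrite big_mkcond; apply: eq_bigr => i _.
by case: ltnP => // /(nth_default 0) ->; rewrite scale0r.
Qed.

Lemma linpoly_lin_assoc m (b : nat -> F) :
  linpoly m b = lin_assoc (conv_assoc m b).
Proof.
rewrite /conv_assoc -poly_def (@lin_assocE m.+1) ?size_poly //.
by apply: eq_bigr => i _; rewrite coef_poly ltn_ord.
Qed.

Lemma size_lin_assoc p : p != 0 -> size (lin_assoc p) = (q ^ (size p).-1).+1.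
Proof.
move=> p_neq0; have sp : (size p).-1.+1 = size p by rewrite prednK // size_poly_gt0.
rewrite (@lin_assocE (size p).-1.+1); last by rewrite sp.
rewrite big_ord_recr /= addrC.
rewrite size_polyDl size_scale ?size_polyXn -?lead_coefE ?lead_coef_eq0 // ltnS.
apply: (big_ind (fun r : {poly F} => size r <= q ^ (size p).-1)%N) => [|r s r_le s_le|i _].
- by rewrite size_poly0.
- by rewrite (leq_trans (size_polyD _ _)) // geq_max r_le.
- by rewrite (leq_trans (size_scale_leq _ _)) // size_polyXn ltn_exp2l ?finNzRing_gt1.
Qed.

Lemma natr_card : q%:R = 0 :> F.
Proof.
have [p _ p_char] := finPcharP F.
have q_eq : q = (p ^ logn p q)%N by exact: card_pprimeChar p_char.
move: (finNzRing_gt1 F); rewrite q_eq natrX (pcharf0 p_char) expr0n.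
by case: (logn p q).
Qed.

Lemma deriv_Xqn k : (0 < k)%N -> ('X^(q ^ k) : {poly F})^`() = 0.
Proof.
move=> k_gt0; rewrite derivXn -mulr_natr natrX -polyC_natr natr_card polyC0.
by rewrite expr0n (gtn_eqF k_gt0) mulr0.
Qed.

Lemma deriv_lin_assoc p : (lin_assoc p)^`() = (p`_0)%:P.
Proof.
rewrite (@lin_assocE (size p).+1) // big_ord_recl /= derivD derivZ expn0 expr1.
rewrite derivX alg_polyC raddf_sum big1 ?addr0 // => i _ /=.
by rewrite derivZ deriv_Xqn ?scaler0 // lift0.
Qed.

Variables (K : fieldType) (iota : {rmorphism F -> K}).
Implicit Types x : K.

Definition lin_eval (p : {poly F}) (x : K) : K :=
  \sum_(i < size p) iota p`_i * x ^+ (q ^ i).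

Lemma lin_evalE N p x :
  (size p <= N)%N -> lin_eval p x = \sum_(i < N) iota p`_i * x ^+ (q ^ i).
Proof.
move=> le_pN; rewrite /lin_eval (big_ord_widen N (fun i => iota p`_i * x ^+ (q ^ i))) //.
rewrite big_mkcond; apply: eq_bigr => i _.
by case: ltnP => // /(nth_default 0) ->; rewrite rmorph0 mul0r.
Qed.

Lemma horner_lin_assoc p x : (map_poly iota (lin_assoc p)).[x] = lin_eval p x.
Proof.
rewrite /lin_assoc rmorph_sum horner_sum; apply: eq_bigr => i _.
by rewrite /= map_polyZ hornerZ map_polyXn hornerXn.
Qed.

Lemma root_comp_lin_assoc p r x :
  root (map_poly iota (p \Po lin_assoc r)) x = root (map_poly iota p) (lin_eval r x).
Proof. by rewrite map_comp_poly root_comp horner_lin_assoc. Qed.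

Lemma lin_evalD p r x : lin_eval (p + r) x = lin_eval p x + lin_eval r x.
Proof.
pose N := maxn (size p) (size r).
rewrite (@lin_evalE N) ?(leq_trans (size_polyD _ _)) // (@lin_evalE N p) ?leq_maxl //.
rewrite (@lin_evalE N r) ?leq_maxr // -big_split; apply: eq_bigr => i _.
by rewrite coefD rmorphD mulrDl.
Qed.

Lemma lin_evalN p x : lin_eval (- p) x = - lin_eval p x.
Proof.
rewrite /lin_eval size_polyN -sumrN; apply: eq_bigr => i _.
by rewrite coefN rmorphN mulNr.
Qed.

Lemma lin_evalB p r x : lin_eval (p - r) x = lin_eval p x - lin_eval r x.
Proof. by rewrite lin_evalD lin_evalN. Qed.

Lemma lin_evalZ a p x : lin_eval (a *: p) x = iota a * lin_eval p x.
Proof.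
rewrite (@lin_evalE (size p)) ?size_scale_leq // /lin_eval mulr_sumr.
by apply: eq_bigr => i _; rewrite coefZ rmorphM mulrA.
Qed.

Lemma lin_evalC a x : lin_eval a%:P x = iota a * x.
Proof. by rewrite (@lin_evalE 1) ?size_polyC ?leq_b1 // big_ord1 coefC /= expn0 expr1. Qed.

Lemma lin_eval0x p : lin_eval p 0 = 0.
Proof. by rewrite /lin_eval big1 // => i _; rewrite (exprq0 F) mulr0. Qed.

Lemma lin_evalDx p x y : lin_eval p (x + y) = lin_eval p x + lin_eval p y.
Proof. by rewrite /lin_eval -big_split; apply: eq_bigr => i _; rewrite (exprqD iota) mulrDr. Qed.

Lemma lin_evalBx p x y : lin_eval p (x - y) = lin_eval p x - lin_eval p y.
Proof. by apply: (addIr (lin_eval p y)); rewrite -lin_evalDx !subrK. Qed.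

Lemma lin_eval_exprq i p x : lin_eval p x ^+ (q ^ i) = lin_eval p (x ^+ (q ^ i)).
Proof.
rewrite /lin_eval (exprq_sum iota); apply: eq_bigr => j _.
by rewrite exprMn exprq_rmorph -!exprM -!expnD addnC.
Qed.

Lemma lin_eval_mulX p x : lin_eval (p * 'X) x = lin_eval p (x ^+ q).
Proof.
rewrite (@lin_evalE (size p).+1); last first.
  by have [->|p_neq0] := eqVneq p 0; rewrite ?mul0r ?size_poly0 // size_mulX.
rewrite big_ord_recl coefMX /= rmorph0 mul0r add0r /lin_eval; apply: eq_bigr => i _.
by rewrite coefMX /bump leq0n /= add1n /= -exprM -expnS.
Qed.

Lemma lin_evalM p r x : lin_eval (p * r) x = lin_eval p (lin_eval r x).
Proof.
elim/poly_ind: p x => [|p a IH] x; first by rewrite mul0r /lin_eval size_poly0 !big_ord0.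
rewrite mulrDl -mulrA (mulrC 'X) mulrA lin_evalD lin_eval_mulX IH mul_polyC lin_evalZ.
by rewrite lin_evalD lin_eval_mulX lin_evalC -(expn1 q) lin_eval_exprq.
Qed.

Lemma lin_eval1 x : lin_eval 1 x = x.
Proof. by rewrite -polyC1 lin_evalC rmorph1 mul1r. Qed.

Lemma lin_evalXn k x : lin_eval 'X^k x = x ^+ (q ^ k).
Proof.
elim: k x => [|k IH] x; first by rewrite expr0 lin_eval1 expn0 expr1.
by rewrite exprSr lin_eval_mulX IH -exprM -expnS.
Qed.

Lemma lin_evalXn_sub1 k x : lin_eval ('X^k - 1) x = x ^+ (q ^ k) - x.
Proof. by rewrite lin_evalB lin_evalXn lin_eval1. Qed.

Lemma lin_eval_eqmod n p r x :
  'X^n - 1 %| p - r -> x ^+ (q ^ n) = x -> lin_eval p x = lin_eval r x.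
Proof.
move=> /dvdpP [w pr] x_fix; apply/eqP; rewrite -subr_eq0 -lin_evalB pr lin_evalM.
by rewrite lin_evalXn_sub1 x_fix subrr lin_eval0x.
Qed.

Lemma lin_eval_coprimep_eq0 p r x :
  coprimep p r -> lin_eval p x = 0 -> lin_eval r x = 0 -> x = 0.
Proof.
move=> /Bezout_eq1_coprimepP [[a b] /= ab_eq1] px rx.
by rewrite -(lin_eval1 x) -ab_eq1 lin_evalD !lin_evalM px rx !lin_eval0x addr0.
Qed.

End LinearizedAssociate.

Lemma dvdp_sqr_deriv (R : fieldType) (g p : {poly R}) : g * g %| p -> g %| p^`().
Proof.
case/dvdpP => w ->; rewrite !derivM.
apply: dvdp_add; first by rewrite dvdp_mull // dvdp_mulr.
rewrite dvdp_mull //; apply: dvdp_add; first by rewrite dvdp_mull.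
by rewrite dvdp_mulr.
Qed.

Section MappedRoots.
Variables (F K : fieldType) (iota : {rmorphism F -> K}).

Lemma root_map_Xn_subX k (y : K) :
  root (map_poly iota ('X^k - 'X)) y = (y ^+ k == y).
Proof. by rewrite rootE rmorphB /= map_polyXn map_polyX !hornerE subr_eq0. Qed.

Lemma horner_map_modp (g p : {poly F}) y :
  root (map_poly iota g) y -> (map_poly iota (p %% g)).[y] = (map_poly iota p).[y].
Proof.
move=> /rootP gy; rewrite [in RHS](divp_eq p g) rmorphD rmorphM hornerD hornerM gy.
by rewrite mulr0 add0r.
Qed.

Lemma irredp_root_dvdpE (g p : {poly F}) y :
  irreducible_poly g -> root (map_poly iota g) y -> (g %| p) = root (map_poly iota p) y.
Proof.
move=> gI gy; apply/idP/idP => [g_dvd | py]; first by apply: root_dvdp gy; rewrite dvdp_map.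
apply: contraT => g_ndvd.
have : coprimep (map_poly iota g) (map_poly iota p).
  by rewrite coprimep_map irreducible_poly_coprime.
by move/coprimep_root/(_ gy); rewrite -rootE py.
Qed.

End MappedRoots.

Section IrreducibleRoots.
Variable F : finFieldType.
Local Notation q := #|F|.

Lemma irredp_root_ext (h : {poly F}) : monic_irreducible_poly h ->
  exists (K : fieldType) (iota : {rmorphism F -> K}) (y : K),
    root (map_poly iota h) y /\ y ^+ (q ^ (size h).-1) = y.
Proof.
move=> h_mi; pose K := {poly %/ h with h_mi}.
pose iota : {rmorphism F -> K} := qpolyC h.
exists K, iota, 'qX; split; last by rewrite -(card_qfpoly h_mi) expf_card.
rewrite rootE -in_qpoly_comp_horner comp_polyXr.
by apply/eqP/val_inj; rewrite /= (mk_monicE h_mi) Pdiv.RingMonic.rmodpp ?h_mi.2.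
Qed.

Lemma irredp_dvdp_Xq_subX (h : {poly F}) :
  monic_irreducible_poly h -> h %| 'X^(q ^ (size h).-1) - 'X.
Proof.
move=> h_mi; have [K [iota [y [hy y_fix]]]] := irredp_root_ext h_mi.
by rewrite (irredp_root_dvdpE _ h_mi.1 hy) root_map_Xn_subX y_fix.
Qed.

Lemma root_irredp_exprq (K : fieldType) (iota : {rmorphism F -> K}) h (y : K) :
  monic_irreducible_poly h -> root (map_poly iota h) y -> y ^+ (q ^ (size h).-1) = y.
Proof.
move=> h_mi hy; apply/eqP; rewrite -(root_map_Xn_subX iota) (root_dvdp _ hy) // dvdp_map.
exact: irredp_dvdp_Xq_subX.
Qed.

(* The values at y of the q^(deg g) polynomials of degree < deg g are distinct
   roots of X^(q^r) - X. *)
Lemma root_irredp_deg_leq (K : fieldType) (iota : {rmorphism F -> K}) g (y : K) r :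
  irreducible_poly g -> root (map_poly iota g) y -> y ^+ (q ^ r) = y -> (0 < r)%N ->
  ((size g).-1 <= r)%N.
Proof.
move=> gI gy y_fix r_gt0; set d := (size g).-1.
have size_g : size g = d.+1 by rewrite prednK // (ltn_trans _ gI.1).
pose vals := [seq (map_poly iota (val p)).[y] | p <- enum {poly_d F}].
have vals_uniq : uniq vals.
  rewrite map_inj_uniq ?enum_uniq // => p1 p2 p12; apply: val_inj => /=; apply/eqP.
  have g_dvd : g %| val p1 - val p2.
    by rewrite (irredp_root_dvdpE _ gI gy) rootE rmorphB hornerD hornerN p12 subrr.
  have : (size (val p1 - val p2)%R < size g)%N.
    by rewrite size_g ltnS (leq_trans (size_polyD _ _)) // size_polyN geq_max !size_npoly.
  by rewrite -subr_eq0; apply: contraTT => /dvdp_leq /(_ g_dvd); rewrite -leqNgt.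
have vals_roots : all (root ('X^(q ^ r) - 'X)) vals.
  apply/allP => _ /mapP [p _ ->].
  by rewrite rootE !hornerE subr_eq0 (horner_exprq iota) y_fix.
have size_Xq : size ('X^(q ^ r) - 'X : {poly K}) = (q ^ r).+1.
  rewrite size_polyDl ?size_polyXn // size_polyN size_polyX ltnS.
  exact: leq_ltn_trans r_gt0 (ltn_expl r (finNzRing_gt1 F)).
have Xq_neq0 : ('X^(q ^ r) - 'X : {poly K}) != 0 by rewrite -size_poly_gt0 size_Xq.
have := max_poly_roots Xq_neq0 vals_roots vals_uniq.
by rewrite size_Xq size_map -cardE card_npoly ltnS leq_exp2l ?finNzRing_gt1.
Qed.

Lemma root_irredp_deg_dvdn (K : fieldType) (iota : {rmorphism F -> K}) h (y : K) r :
  monic_irreducible_poly h -> root (map_poly iota h) y -> y ^+ (q ^ r) = y ->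
  ((size h).-1 %| r)%N.
Proof.
move=> h_mi hy y_fix.
have d_gt0 : (0 < (size h).-1)%N by rewrite -subn1 subn_gt0 h_mi.1.1.
have y_mod : y ^+ (q ^ (r %% (size h).-1)%N) = y.
  by rewrite -(exprq_modn r (root_irredp_exprq h_mi hy)).
rewrite /dvdn; apply: contraT; rewrite -lt0n => r_mod.
have := root_irredp_deg_leq h_mi.1 hy y_mod r_mod.
by rewrite leqNgt ltn_mod d_gt0.
Qed.

Lemma exists_monic_irredp_dvdp (p : {poly F}) :
  (1 < size p)%N -> exists h, [/\ irreducible_poly h, h \is monic & h %| p].
Proof.
move=> p_gt1; suff [h hI h_dvd] : exists2 h, irreducible_poly h & h %| p.
  have lc_neq0 : (lead_coef h)^-1 != 0 by rewrite invr_eq0 lead_coef_eq0 irredp_neq0.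
  exists ((lead_coef h)^-1 *: h); split; last by rewrite dvdpZl.
    split=> [|r r_neq1]; first by rewrite size_scale ?hI.1.
    rewrite dvdpZr // => /(hI r r_neq1) r_eqp.
    by rewrite (eqp_trans r_eqp) // eqp_sym eqp_scale.
  by rewrite monicE lead_coefZ mulVf ?lead_coef_eq0 ?irredp_neq0.
have [s] := ubnP (size p); elim: s p p_gt1 => // s IH p p_gt1 /ltnSE p_le.
have [p_irr|] := boolP (irreducibleb p); first by exists p => //; apply/irreducibleP.
rewrite /irreducibleb p_gt1 /= negb_forall => /existsP [r].
rewrite negb_imply -ltnNge -Pdiv.Idomain.dvdpE => /andP [r_dvd r_gt1].
have r_lt : (size r < size p)%N.
  by rewrite (leq_ltn_trans (size_npoly r)) // ltn_predL ltnW.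
have [h hI h_dvd] := IH r r_gt1 (leq_trans r_lt p_le).
by exists h; rewrite // (dvdp_trans h_dvd r_dvd).
Qed.

End IrreducibleRoots.

Section PrimitivePoly.
Variables (F : finFieldType) (c : {poly F}).
Hypothesis c_prim : primitive_poly c.
Local Notation e := (#|F| ^ (size c).-1 - 1)%N.

Let c_irr : irreducible_poly c := (primitive_mi c_prim).1.

Let c_primitive : c %| 'X^e - 1 /\ forall k, (0 < k < e)%N -> ~~ (c %| 'X^k - 1).
Proof.
case/primitive_polyP: c_prim => -[_ c_monic].
by rewrite card_monic_qpoly ?c_irr.1 // subn1.
Qed.

Lemma primitive_order_gt0 : (0 < e)%N.
Proof. by rewrite subn_gt0 -(expn0 #|F|) ltn_exp2l ?finNzRing_gt1 // -subn1 subn_gt0 c_irr.1. Qed.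

Lemma dvdp_Xn_sub1_primitive k : (c %| 'X^k - 1) = (e %| k)%N.
Proof.
have [c_dvd c_min] := c_primitive.
have Xe_dvd j : ('X^e - 1 : {poly F}) %| 'X^(e * j) - 1.
  by rewrite exprM [X in _ %| X]subrX1 dvdp_mulr.
apply/idP/idP => [c_dvd_k | /dvdnP [j ->]]; last by rewrite mulnC (dvdp_trans c_dvd).
rewrite /dvdn; apply: contraTT c_dvd_k => k_mod.
have -> : 'X^k - 1 = 'X^(k %% e)%N * ('X^(e * (k %/ e)) - 1) + ('X^(k %% e)%N - 1) :> {poly F}.
  by rewrite mulrBr mulr1 -exprD addrA subrK addnC mulnC -divn_eq.
rewrite dvdp_addr; last by rewrite dvdp_mull // (dvdp_trans c_dvd).
by apply: c_min; rewrite lt0n k_mod ltn_mod primitive_order_gt0.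
Qed.

Lemma primitive_coef0_neq0 : c`_0 != 0.
Proof.
have [c_dvd _] := c_primitive.
apply/negP => /eqP c0; have : root c 0 by rewrite rootE horner_coef0 c0.
move/(root_dvdp c_dvd); rewrite rootE !hornerE expr0n (gtn_eqF primitive_order_gt0) /=.
by rewrite sub0r oppr_eq0 oner_eq0.
Qed.

Lemma coprimep_primitive_Xn_sub1 n :
  coprime n e -> c != 'X - 1 -> coprimep c ('X^n - 1).
Proof.
move=> ne_coprime c_neq; rewrite irreducible_poly_coprime // dvdp_Xn_sub1_primitive.
apply: contra c_neq => e_dvd_n.
have e1 : e = 1%N by rewrite -(gcdn_idPl e_dvd_n) gcdnC; apply/eqP.
have c_dvd : c %| 'X - 1%:P by rewrite -[X in X - _]expr1 polyC1 dvdp_Xn_sub1_primitive e1.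
rewrite -polyC1 -eqp_monic ?monicXsubC ?(primitive_mi c_prim).2 //.
rewrite -dvdp_size_eqp // size_XsubC eqn_leq c_irr.1 andbT.
by rewrite -(size_XsubC (1 : F)) dvdp_leq ?polyXsubC_eq0.
Qed.

End PrimitivePoly.

Section Construction.
Variables (F : finFieldType) (n : nat) (c u f psi : {poly F}).
Variables (K : fieldType) (iota : {rmorphism F -> K}) (alpha : K).
Local Notation q := #|F|.
Local Notation e := (q ^ (size c).-1 - 1)%N.
Local Notation l := (lin_assoc c).
Local Notation G := ((psi \Po l) %/ f).

Hypotheses (c_prim : primitive_poly c) (ne_coprime : coprime n e)
  (u_inv : 'X^n - 1 %| u * c - 1).
Hypotheses (f_mi : monic_irreducible_poly f) (size_f : size f = n.+1)
  (f_alpha : root (map_poly iota f) alpha).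
Hypotheses (psi_monic : psi \is monic) (f_dvd_psi : f %| psi \Po (l %% f))
  (psi_min : forall p, p != 0 -> f %| p \Po (l %% f) -> (size psi <= size p)%N).

Let beta := lin_eval iota c alpha.
Let c_irr : irreducible_poly c := (primitive_mi c_prim).1.

Let n_gt0 : (0 < n)%N. Proof. by have := f_mi.1.1; rewrite size_f. Qed.

Lemma lin_eval_cK (K' : fieldType) (iota' : {rmorphism F -> K'}) x :
  x ^+ (q ^ n) = x -> lin_eval iota' u (lin_eval iota' c x) = x.
Proof. by move=> x_fix; rewrite -lin_evalM (lin_eval_eqmod _ u_inv x_fix) lin_eval1. Qed.

Lemma alpha_exprq : alpha ^+ (q ^ n) = alpha.
Proof. by have := root_irredp_exprq f_mi f_alpha; rewrite size_f. Qed.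

Lemma dvdp_comp_lin_assoc p : (f %| p \Po l) = root (map_poly iota p) beta.
Proof. by rewrite (irredp_root_dvdpE _ f_mi.1 f_alpha) root_comp_lin_assoc. Qed.

Lemma dvdp_comp_modp_lin_assoc p : (f %| p \Po (l %% f)) = root (map_poly iota p) beta.
Proof.
rewrite (irredp_root_dvdpE _ f_mi.1 f_alpha) map_comp_poly root_comp.
by rewrite horner_map_modp // horner_lin_assoc.
Qed.

Lemma psi_root : root (map_poly iota psi) beta.
Proof. by rewrite -dvdp_comp_modp_lin_assoc. Qed.

Lemma psi_dvdp p : root (map_poly iota p) beta -> psi %| p.
Proof.
move=> p_beta; apply/modp_eq0P/eqP; apply: contraT => rem_neq0.
have := psi_min rem_neq0; rewrite dvdp_comp_modp_lin_assoc rootE horner_map_modp ?psi_root //.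
by rewrite -rootE => /(_ p_beta); rewrite leqNgt ltn_modp monic_neq0.
Qed.

Lemma psi_irr : irreducible_poly psi.
Proof.
have psi_neq0 : psi != 0 := monic_neq0 psi_monic.
split=> [|r r_neq1 r_dvd].
  rewrite ltnNge; apply/negP => /size1_polyC psi_C; move: psi_root.
  by rewrite psi_C map_polyC rootC fmorph_eq0 -polyC_eq0 -psi_C (negbTE psi_neq0).
have psiE := divpK r_dvd.
have r_neq0 : r != 0.
  by apply: contraNneq psi_neq0 => r0; move: r_dvd; rewrite r0 dvd0p => /eqP ->.
have quo_neq0 : psi %/ r != 0 by apply: contraNneq psi_neq0 => q0; rewrite -psiE q0 mul0r.
have /orP [quo_root | r_root] :
    root (map_poly iota (psi %/ r)) beta || root (map_poly iota r) beta.
  by rewrite -rootM -rmorphM psiE psi_root.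
  have := dvdp_leq quo_neq0 (psi_dvdp quo_root); rewrite -{1}psiE size_mul //.
  have r_gt0 : (0 < size r)%N by rewrite size_poly_gt0.
  rewrite -(prednK r_gt0) addnS /= -{2}[size (psi %/ r)]addn0 leq_add2l leqn0 => /eqP r1.
  by move: r_neq1; rewrite -(prednK r_gt0) r1.
by apply/andP; split; last exact: psi_dvdp r_root.
Qed.

Let psi_mi : monic_irreducible_poly psi := (psi_irr, psi_monic).

Lemma psi_dvdp_f_comp : psi %| f \Po lin_assoc u.
Proof. by apply: psi_dvdp; rewrite root_comp_lin_assoc lin_eval_cK ?alpha_exprq. Qed.

Lemma psi_root_f_root (K' : fieldType) (iota' : {rmorphism F -> K'}) y :
  root (map_poly iota' psi) y -> root (map_poly iota' f) (lin_eval iota' u y).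
Proof.
by move=> psi_y; rewrite -root_comp_lin_assoc (root_dvdp _ psi_y) // dvdp_map psi_dvdp_f_comp.
Qed.

Lemma size_psi : size psi = n.+1.
Proof.
have beta_fix : beta ^+ (q ^ n) = beta by rewrite lin_eval_exprq alpha_exprq.
have deg_dvd_n := root_irredp_deg_dvdn psi_mi psi_root beta_fix.
have [K' [iota' [rho [psi_rho rho_fix]]]] := irredp_root_ext psi_mi.
have f_root := psi_root_f_root psi_rho.
have f_root_fix : lin_eval iota' u rho ^+ (q ^ (size psi).-1) = lin_eval iota' u rho.
  by rewrite lin_eval_exprq rho_fix.
have := root_irredp_deg_dvdn f_mi f_root f_root_fix; rewrite size_f => n_dvd_deg.
have deg_psi : (size psi).-1 = n.
  by apply/eqP; rewrite eqn_dvd deg_dvd_n n_dvd_deg.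
by rewrite -deg_psi prednK // size_poly_gt0 monic_neq0.
Qed.

Lemma f_dvdp_psi_comp : f %| psi \Po l.
Proof. by rewrite dvdp_comp_lin_assoc psi_root. Qed.

Lemma sqr_f_ndvdp_psi_comp : ~~ (f * f %| psi \Po l).
Proof.
apply/negP => ff_dvd.
have psi_dvd : psi %| 'X^(q ^ n) - 'X by have := irredp_dvdp_Xq_subX psi_mi; rewrite size_psi.
have c0_neq0 : (- c`_0)%:P != 0 by rewrite polyC_eq0 oppr_eq0 primitive_coef0_neq0.
have := dvdp_sqr_deriv (dvdp_trans ff_dvd (dvdp_comp_poly l psi_dvd)).
rewrite deriv_comp derivB deriv_Xqn // derivX sub0r deriv_lin_assoc.
rewrite -polyC1 -polyCN comp_polyC -polyCM mulN1r.
move/(dvdp_leq c0_neq0); rewrite size_polyC -polyC_eq0 c0_neq0 size_f ltnS.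
by rewrite leqNgt n_gt0.
Qed.

Section IrreducibleFactor.
Variables (K' : fieldType) (iota' : {rmorphism F -> K'}) (g : K') (d : nat).
Hypotheses (psi_g : root (map_poly iota' psi) (lin_eval iota' c g))
  (g_fix : g ^+ (q ^ d) = g).

Lemma psi_root_dvdn_n : (n %| d)%N.
Proof.
have f_root := psi_root_f_root psi_g.
have root_fix : lin_eval iota' u (lin_eval iota' c g) ^+ (q ^ d) =
                lin_eval iota' u (lin_eval iota' c g) by rewrite !lin_eval_exprq g_fix.
by have := root_irredp_deg_dvdn f_mi f_root root_fix; rewrite size_f.
Qed.

Lemma psi_root_dvdn_e : ~~ root (map_poly iota' f) g -> (e %| d)%N.
Proof.
move=> f_ng; pose kappa := g ^+ (q ^ n) - g.
have kappa_neq0 : kappa != 0.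
  apply: contra f_ng; rewrite subr_eq0 => /eqP g_n.
  by rewrite -(lin_eval_cK iota' g_n) psi_root_f_root.
have c_kappa : lin_eval iota' c kappa = 0.
  have := root_irredp_exprq psi_mi psi_g; rewrite size_psi => psi_g_fix.
  by rewrite lin_evalBx -lin_eval_exprq psi_g_fix subrr.
have kappa_fix : kappa ^+ (q ^ d) = kappa.
  by rewrite (exprqB iota') -exprM mulnC exprM g_fix.
rewrite -(dvdp_Xn_sub1_primitive c_prim); apply: contraR kappa_neq0 => c_ndvd.
have c_cop : coprimep c ('X^d - 1).
  by rewrite (irreducible_poly_coprime _ c_irr).
apply/eqP; apply: (lin_eval_coprimep_eq0 c_cop c_kappa).
by rewrite lin_evalXn_sub1 kappa_fix subrr.
Qed.

End IrreducibleFactor.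

Lemma irredp_dvdp_quo_deg_geq h :
  monic_irreducible_poly h -> h %| G -> (n * e <= (size h).-1)%N.
Proof.
move=> h_mi h_dvd; have [K' [iota' [g [h_g g_fix]]]] := irredp_root_ext h_mi.
have psi_g : root (map_poly iota' psi) (lin_eval iota' c g).
  rewrite -root_comp_lin_assoc (root_dvdp _ h_g) // dvdp_map (dvdp_trans h_dvd) //.
  exact: divp_dvd f_dvdp_psi_comp.
have f_ng : ~~ root (map_poly iota' f) g.
  apply: contra sqr_f_ndvdp_psi_comp => f_g.
  have h_eqp : h %= f.
    apply: f_mi.1; first by rewrite neq_ltn h_mi.1.1 orbT.
    by rewrite (irredp_root_dvdpE _ h_mi.1 h_g).
  have h_eq : h = f by apply/eqP; rewrite -eqp_monic ?h_mi.2 ?f_mi.2.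
  subst h; rewrite -(divpK f_dvdp_psi_comp) dvdp_mul2r ?monic_neq0 ?f_mi.2 //.
have d_gt0 : (0 < (size h).-1)%N by rewrite -subn1 subn_gt0 h_mi.1.1.
apply: dvdn_leq d_gt0 _; rewrite Gauss_dvd //.
by rewrite (psi_root_dvdn_n psi_g g_fix) (psi_root_dvdn_e psi_g g_fix f_ng).
Qed.

Lemma size_G : size G = (n * e).+1.
Proof.
have q_gt0 : (0 < q)%N := ltnW (finNzRing_gt1 F).
have size_l : size l = (q ^ (size c).-1).+1.
  by rewrite size_lin_assoc // irredp_neq0.
have size_comp : size (psi \Po l) = (n * q ^ (size c).-1).+1.
  have := size_comp_poly psi l; rewrite size_psi size_l /=.
  have : (0 < n * q ^ (size c).-1)%N by rewrite muln_gt0 n_gt0 expn_gt0 q_gt0.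
  case: (size (psi \Po l)) => [|k] /= N_gt0 N_eq; last by rewrite N_eq.
  by rewrite -N_eq in N_gt0.
rewrite size_divp ?monic_neq0 ?f_mi.2 // size_comp size_f /= mulnBr muln1 subSn //.
by rewrite leq_pmulr // expn_gt0 q_gt0.
Qed.

Lemma G_irr : irreducible_poly G.
Proof.
have G_neq0 : G != 0 by rewrite -size_poly_eq0 size_G.
split=> [|r r_neq1 r_dvd].
  by rewrite size_G ltnS muln_gt0 n_gt0 primitive_order_gt0.
have r_neq0 : r != 0.
  by apply: contraNneq G_neq0 => r0; move: r_dvd; rewrite r0 dvd0p => /eqP ->.
have r_gt1 : (1 < size r)%N by rewrite ltn_neqAle eq_sym r_neq1 size_poly_gt0.
have [h [h_irr h_monic h_dvd]] := exists_monic_irredp_dvdp r_gt1.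
have := irredp_dvdp_quo_deg_geq (h_irr, h_monic) (dvdp_trans h_dvd r_dvd).
rewrite -dvdp_size_eqp // eqn_leq dvdp_leq //= size_G => deg_h.
rewrite (leq_trans _ (dvdp_leq r_neq0 h_dvd)) //.
by rewrite -(prednK (ltnW h_irr.1)) ltnS.
Qed.

Theorem comp_lin_assoc_irreducible :
  [/\ irreducible_poly psi, size psi = n.+1, f %| psi \Po l,
      irreducible_poly G & size G = (n * e).+1].
Proof.
by split; [exact: psi_irr | exact: size_psi | exact: f_dvdp_psi_comp | exact: G_irr | exact: size_G].
Qed.

End Construction.

Theorem mainTheorem6 (F : finFieldType) (m n : nat) (b : nat -> F)
    (f psi : {poly F}) :
  (1 <= m)%N -> (1 <= n)%N ->
  coprime n (#|F| ^ m - 1) ->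
  primitive_poly (conv_assoc m b) -> size (conv_assoc m b) = m.+1 ->
  conv_assoc m b != 'X - 1 ->
  f \is monic -> irreducible_poly f -> size f = n.+1 ->
  psi \is monic ->
  f %| (psi \Po (linpoly m b %% f)) ->
  (forall p : {poly F}, p != 0 -> f %| (p \Po (linpoly m b %% f)) ->
     (size psi <= size p)%N) ->
  [/\ irreducible_poly psi, size psi = n.+1,
      f %| (psi \Po linpoly m b),
      irreducible_poly ((psi \Po linpoly m b) %/ f) &
      size ((psi \Po linpoly m b) %/ f) = (n * (#|F| ^ m - 1)).+1].
Proof.
(* The hypotheses [1 <= m] and [1 <= n] follow from the others. *)
move=> _ _ ne_coprime c_prim size_c c_neq f_monic f_irr size_f psi_monic f_dvd psi_min.
have f_mi : monic_irreducible_poly f := (f_irr, f_monic).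
rewrite linpoly_lin_assoc in f_dvd psi_min *.
have e_eq : (#|F| ^ m - 1)%N = (#|F| ^ (size (conv_assoc m b)).-1 - 1)%N by rewrite size_c.
rewrite e_eq in ne_coprime *.
have [u u_inv] : exists u, 'X^n - 1 %| u * conv_assoc m b - 1.
  have := coprimep_primitive_Xn_sub1 c_prim ne_coprime c_neq.
  case/Bezout_eq1_coprimepP => -[u v] /= uv_eq1.
  exists u; rewrite -{2}uv_eq1 opprD addrA subrr add0r dvdpNr.
  exact: dvdp_mull.
have [K [iota [alpha [f_alpha _]]]] := irredp_root_ext f_mi.
exact: comp_lin_assoc_irreducible c_prim ne_coprime u_inv f_mi size_f f_alpha
  psi_monic f_dvd psi_min.
Qed.
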